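(* Let $d, r$ be positive integers with $r \geq 2$ and such that $m := r \log r$ is a positive integer, and let $B > 0$, $\epsilon > 0$, $0 < \delta < 1$. Let $\eta$ be an $m \times (d+1)$ random matrix whose rows $\eta_1, \ldots, \eta_m$ are independent, each with independent coordinates distributed as $\mathcal{N}\!\left(0, \frac{8B^2 \ln(1.25/\delta)}{\epsilon^2}\right)$. Fix $\beta \in \mathbb{R}^d$ and let $\beta_{-1} = \begin{bmatrix} \beta \\ -1 \end{bmatrix} \in \mathbb{R}^{d+1}$. Then there is an absolute constant $c > 0$ (independent of $d, r, B, \epsilon, \delta, \beta$) such that, with probability at least $c$, $$\|\eta \beta_{-1}\|_1 \leq \frac{2B\, r \log r \sqrt{2 \ln(1.25/\delta)}}{\epsilon}\, \|\beta_{-1}\|_1 .$$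
   Context: This bound is used in the paper for the regularization term arising when a sketch $S\hat{A}$ of the noise-augmented matrix $\hat{A} = \begin{bmatrix} A \\ \eta \end{bmatrix}$ is released for private $\ell_1$ regression, where $A \in \mathbb{R}^{n \times (d+1)}$ is a data matrix with rows of $\ell_2$ norm at most $B$ and $S \in \{0,1\}^{r \times (n + r\log r)}$ has a single $1$ in each column. ''With constant probability'' in the paper is interpreted as ''with probability at least some absolute positive constant''. *)

From HB Require Import structures.
From mathcomp Require Import all_boot all_order all_algebra.
From mathcomp Require Import all_classical all_reals all_analysis.
Set Implicit Arguments. Unset Strict Implicit. Unset Printing Implicit Defensive.
Import Order.TTheory GRing.Theory Num.Theory.
Local Open Scope classical_set_scope.
Local Open Scope ring_scope.

Definition mutually_independent {R : realType} {d : measure_display}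
  {T : measurableType d} (P : probability T R) (I : finType)
  (X : I -> T -> R) : Prop :=
  forall (J : {set I}) (A : I -> set R),
    (forall i, measurable (A i)) ->
    P (\bigcap_(i in [set` J]) (X i @^-1` A i)) =
    (\prod_(i in J) P (X i @^-1` A i))%E.

(* X has law N(mu, s^2) (s = standard deviation). *)
Definition has_normal_law {R : realType} {d : measure_display}
  {T : measurableType d} (P : probability T R) (X : T -> R) (mu s : R) : Prop :=
  forall A : set R, measurable A -> P (X @^-1` A) = normal_prob mu s A.

Definition l1norm {R : realType} (m n : nat) (M : 'M[R]_(m, n)) : R :=
  \sum_(i < m) \sum_(j < n) `|M i j|.

Definition beta_ext {R : realType} (d : nat) (beta : 'cV[R]_d) : 'cV[R]_(d + 1) :=
  col_mx beta (const_mx (-1)).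

From HB Require Import structures.
From mathcomp Require Import all_boot all_order all_algebra.
From mathcomp Require Import all_classical all_reals all_analysis.
From mathcomp Require Import measurable_realfun ring.

(* The l1 norm of eta beta_{-1} is dominated by Y = sum_(i,j) |eta_ij| |beta_j|,
   and a centred Gaussian of standard deviation s has E|X| = sqrt(2/pi) s.  With
   s = 2 B sqrt(2 ln(1.25/delta)) / eps and m = r log r rows, the claimed bound
   is exactly m s |beta_{-1}|_1 = E[Y] / sqrt(2/pi), so Markov's inequality
   bounds the failure probability by sqrt(2/pi) < 1 (as pi > 2), and
   c = 1 - sqrt(2/pi) works. *)

Set Implicit Arguments.
Unset Strict Implicit.
Unset Printing Implicit Defensive.

Import Order.TTheory GRing.Theory Num.Theory.
Import numFieldNormedType.Exports.
Local Open Scope classical_set_scope.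
Local Open Scope ring_scope.

Section gaussian_absolute_moment.
Context {R : realType}.
Notation mu := (@lebesgue_measure R).

Lemma pi_gt2 : 2 < (pi : R).
Proof.
rewrite lt_neqAle pi_ge2 andbT; apply/eqP => pi2.
have := @cos1_gt0 R.
by rewrite (_ : 1 = pi / 2) ?cos_pihalf ?ltxx // -pi2 divff.
Qed.

Lemma sqrt2_divpi_lt1 : Num.sqrt (2 / pi) < 1 :> R.
Proof. by rewrite -[ltRHS]sqrtr1 ltr_sqrt // ltr_pdivrMr ?pi_gt0 // mul1r pi_gt2. Qed.

Lemma cvgy_expR_Nsqr_div (c : R) : 0 < c ->
  expR (- x ^+ 2 / c) @[x --> +oo] --> 0.
Proof.
move=> c_gt0.
have -> : (fun x => expR (- x ^+ 2 / c)) = gauss_fun \o (fun x => x * (Num.sqrt c)^-1).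
  apply/funext => x /=.
  by rewrite /gauss_fun exprMn exprVn sqr_sqrtr ?ltW // mulNr.
apply: cvg_comp cvg_gauss_fun.
by apply: gt0_cvgMly; [rewrite invr_gt0 sqrtr_gt0 | exact: cvg_id].
Qed.

Lemma is_derive_expR_Nsqr_div (c x : R) :
  is_derive x 1 (fun y => expR (- y ^+ 2 / c))
    (expR (- x ^+ 2 / c) * (- (x *+ 2) / c)).
Proof.
apply: is_derive1_comp.
have -> : (fun y : R => - y ^+ 2 / c) = (- c^-1) \*: ((@id R) ^+ 2).
  by apply/funext => y /=; rewrite /GRing.scale /= exprfctE /= mulrC mulrN mulNr.
apply: is_derive_eq.
by rewrite /GRing.scale /= mulr1 expr1 mulrC mulr_natl mulrN mulNr.
Qed.

Lemma normal_pdf0E (s x : R) : s != 0 ->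
  normal_pdf 0 s x = normal_peak s * expR (- x ^+ 2 / (s ^+ 2 *+ 2)).
Proof. by move=> s_neq0; rewrite /normal_pdf (negbTE s_neq0) /normal_fun subr0. Qed.

Lemma sqr_normal_peak_mul2n (s : R) : 0 < s ->
  s ^+ 2 * normal_peak s *+ 2 = Num.sqrt (2 / pi) * s.
Proof.
rewrite /normal_peak; have := @pi_gt0 R; move: (pi : R) => p p_gt0 s_gt0.
have sqrt_p2_gt0 : 0 < Num.sqrt (p *+ 2) by rewrite sqrtr_gt0 pmulrn_lgt0.
have -> : Num.sqrt (2 / p) = 2 / Num.sqrt (p *+ 2).
  rewrite -[2 / p](_ : (2 / Num.sqrt (p *+ 2)) ^+ 2 = _).
    by rewrite sqrtr_sqr ger0_norm // divr_ge0 // ltW.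
  rewrite exprMn exprVn sqr_sqrtr ?pmulrn_lge0 ?ltW // -mulr_natr.
  by field; rewrite gt_eqF.
rewrite -[s ^+ 2 * p *+ 2]mulrnAr sqrtrM ?sqr_ge0 // sqrtr_sqr gtr0_norm //.
by field; rewrite !gt_eqF.
Qed.

Lemma integral_abs_normal_pdf (s : R) : 0 < s ->
  (\int[mu]_x (`|x| * normal_pdf 0 s x)%:E = (Num.sqrt (2 / pi) * s)%:E)%E.
Proof.
move=> s_gt0; have s_neq0 : s != 0 by rewrite gt_eqF.
set c := s ^+ 2 *+ 2; have c_gt0 : 0 < c by rewrite pmulrn_lgt0 // exprn_gt0.
set k := normal_peak s.
have cont : continuous (fun x : R => `|x| * normal_pdf 0 s x).
  by move=> x; apply: cvgM; [exact: norm_continuous | exact: continuous_normal_pdf].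
rewrite ge0_symfun_integralT; last 3 first.
- by move=> x; rewrite mulr_ge0 // normal_pdf_ge0.
- exact: cont.
- by move=> x /=; rewrite normrN !normal_pdf0E // sqrrN.
rewrite -set_itvcy -sqr_normal_peak_mul2n //.
pose F (x : R) := - (s ^+ 2 * k) * expR (- x ^+ 2 / c).
have dF (x : R) : is_derive x (1 : R) F (x * (k * expR (- x ^+ 2 / c))).
  apply: is_derive_eq (is_deriveZ _ (is_derive_expR_Nsqr_div c x)) _.
  by rewrite /c /GRing.scale /=; field.
rewrite (@ge0_continuous_FTC2y _ (fun x => `|x| * normal_pdf 0 s x) F 0 0).
- rewrite /F expr0n /= oppr0 mul0r expR0 mulr1 add0e opprK -EFinM.
  by rewrite mulr_natl.
- by move=> x _; rewrite mulr_ge0 // normal_pdf_ge0.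
- exact: continuous_subspaceT.
- rewrite /F -[X in _ --> X](mulr0 (- (s ^+ 2 * k))).
  by apply: cvgM; [exact: cvg_cst | exact: cvgy_expR_Nsqr_div].
- by move=> x _; apply: ex_derive; exact: dF.
- apply: cvg_at_right_filter; apply: differentiable_continuous.
  by apply/derivable1_diffP; apply: ex_derive; exact: dF.
- move=> x; rewrite in_itv /= andbT => x_gt0.
  by rewrite derive1E derive_val gtr0_norm // normal_pdf0E.
Qed.

Lemma integral_normal_prob (m s : R) (g : R -> \bar R) :
  (forall x, 0 <= g x)%E -> measurable_fun [set: R] g ->
  (\int[normal_prob m s]_x g x = \int[mu]_x (g x * (normal_pdf m s x)%:E))%E.
Proof.
(* the Radon-Nikodym derivative of normal_prob is a.e. its density normal_pdf *)
move=> g_ge0 mg; have dom := @normal_prob_dominates R m s.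
rewrite -(Radon_Nikodym_SigmaFinite.change_of_variables dom g_ge0 measurableT mg).
have int_RN := Radon_Nikodym_SigmaFinite.f_integrable dom.
have mpdf : measurable_fun [set: R] (EFin \o normal_pdf m s).
  by apply/measurable_EFinP; exact: measurable_normal_pdf.
apply: ae_eq_integral => //.
- by apply: emeasurable_funM => //; exact: measurable_int int_RN.
- exact: emeasurable_funM.
- apply: ae_eqe_mul2l; apply: integral_ae_eq => // E _ mE.
  by rewrite -Radon_Nikodym_SigmaFinite.f_integral.
Qed.

Lemma integral_abs_normal_law d (T : measurableType d) (P : probability T R)
    (X : T -> R) (s : R) :
  0 < s -> measurable_fun [set: T] X -> has_normal_law P X 0 s ->
  (\int[P]_t (`|X t|)%:E = (Num.sqrt (2 / pi) * s)%:E)%E.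
Proof.
move=> s_gt0 mX law.
have mabs : measurable_fun [set: R] (fun y : R => (`|y|)%:E).
  by apply/measurable_EFinP; exact: normr_measurable.
rewrite -[LHS]/(\int[P]_(t in X @^-1` setT) ((fun y => (`|y|)%:E) \o X) t)%E.
(* push forward into the Borel space of R, where normal_prob lives *)
have mX' : measurable_fun [set: T] (X : T -> measurableTypeR R) by [].
rewrite -(ge0_integral_pushforward mX') //.
transitivity (\int[normal_prob 0 s]_y (`|y|)%:E)%E.
  by apply: eq_measure_integral => A mA _; exact: law.
by rewrite integral_normal_prob // -integral_abs_normal_pdf.
Qed.

End gaussian_absolute_moment.

Section markov.
Context d (T : measurableType d) (R : realType).

Lemma measurable_fun_lt (D : set T) (f g : T -> R) :
  measurable D -> measurable_fun D f -> measurable_fun D g ->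
  measurable (D `&` [set x | f x < g x]).
Proof.
move=> mD mf mg; under eq_set => x do rewrite -lte_fin.
by apply: measurable_lte => //; exact: measurableT_comp.
Qed.

Lemma markov_nonneg (mu : {measure set T -> \bar R}) (Y : T -> R) (a : R) :
  0 < a -> measurable_fun [set: T] Y -> (forall t, 0 <= Y t) ->
  (a%:E * mu [set t | (a <= Y t)%R] <= \int[mu]_t (Y t)%:E)%E.
Proof.
move=> a_gt0 mY Y_ge0.
have mYE : measurable_fun [set: T] (EFin \o Y) by exact/measurable_EFinP.
have mid : measurable_fun [set: \bar R] id by [].
have := le_integral_comp_abse mu measurableT mid (fun _ => id)
  (fun x y _ _ => id) mYE a_gt0.
rewrite setTI (_ : [set x | _] = [set t | (a <= Y t)%R]); last first.
  by apply/seteqP; split => t /=; rewrite ger0_norm ?lee_fin.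
by rewrite (eq_integral (fun t => (Y t)%:E)) // => t _ /=; rewrite ger0_norm.
Qed.

Lemma markov_prob_lt_ge1B (P : probability T R) (Y : T -> R) (a k : R) :
  0 < a -> measurable_fun [set: T] Y -> (forall t, 0 <= Y t) ->
  (\int[P]_t (Y t)%:E <= (k * a)%:E)%E ->
  ((1 - k)%:E <= P [set t | (Y t < a)%R])%E.
Proof.
move=> a_gt0 mY Y_ge0 EY.
have mge : measurable [set t | (a <= Y t)%R].
  by rewrite -[X in measurable X]setTI; exact: measurable_fun_le.
have tail : (P [set t | (a <= Y t)%R] <= k%:E)%E.
  rewrite -(@lee_pmul2l _ a%:E) ?lte_fin // -EFinM mulrC.
  exact: le_trans (markov_nonneg P a_gt0 mY Y_ge0) EY.
rewrite (_ : [set t | (Y t < a)%R] = ~` [set t | (a <= Y t)%R]); last first.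
  by apply/seteqP; split => t /=; rewrite ltNge => /negP.
by rewrite probability_setC // EFinB leeB.
Qed.

End markov.

Section l1norm.
Context {R : realType}.

Lemma l1norm_col n (v : 'cV[R]_n) : l1norm v = \sum_j `|v j 0|.
Proof. by apply: eq_bigr => j _; rewrite big_ord1. Qed.

Lemma l1norm_mulmx_le m n (M : 'M[R]_(m, n)) (v : 'cV[R]_n) :
  l1norm (M *m v) <= \sum_i \sum_j `|M i j| * `|v j 0|.
Proof.
rewrite l1norm_col; apply: ler_sum => i _; rewrite mxE.
by apply: le_trans (ler_norm_sum _ _ _) _; apply: ler_sum => j _; rewrite normrM.
Qed.

Lemma l1norm_beta_ext_ge1 d (beta : 'cV[R]_d) : 1 <= l1norm (beta_ext beta).
Proof.
rewrite l1norm_col (bigD1 (rshift d ord0)) //= col_mxEd mxE normrN normr1.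
by rewrite lerDl sumr_ge0.
Qed.

End l1norm.

Section weighted_abs_entries.
Context d (T : measurableType d) (R : realType) (m n : nat).
Variables (M : T -> 'M[R]_(m, n)) (w : 'I_n -> R).
Hypothesis mM : forall i j, measurable_fun [set: T] (fun t => M t i j).

Let mabs i j : measurable_fun [set: T] (fun t => `|M t i j|).
Proof. exact: measurableT_comp (mM i j). Qed.

Lemma measurable_weighted_abs_entries :
  measurable_fun [set: T] (fun t => \sum_i \sum_j `|M t i j| * w j).
Proof.
apply: measurable_sum => i; apply: measurable_sum => j.
exact: measurable_funM (mabs i j) (measurable_cst _).
Qed.

Lemma weighted_abs_entries_ge0 : (forall j, 0 <= w j) ->
  forall t, 0 <= \sum_i \sum_j `|M t i j| * w j.
Proof.
move=> w_ge0 t; rewrite sumr_ge0 // => i _.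
by rewrite sumr_ge0 // => j _; rewrite mulr_ge0.
Qed.

Lemma measurable_l1norm_mulmx (v : 'cV[R]_n) :
  measurable_fun [set: T] (fun t => l1norm (M t *m v)).
Proof.
apply: measurable_sum => i; apply: measurable_sum => k.
apply: measurableT_comp => //.
have -> : (fun t => (M t *m v) i k) = fun t => \sum_j M t i j * v j k.
  by apply/funext => t; rewrite mxE.
by apply: measurable_sum => j; exact: measurable_funM (mM i j) (measurable_cst _).
Qed.

Lemma integral_weighted_abs_entries (mu : {measure set T -> \bar R}) (e : R) :
  (forall j, 0 <= w j) -> (forall i j, \int[mu]_t (`|M t i j|)%:E = e%:E)%E ->
  (\int[mu]_t (\sum_i \sum_j `|M t i j| * w j)%:E = (m%:R * e * \sum_j w j)%:E)%E.
Proof.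
move=> w_ge0 EM.
have mwabs i j : measurable_fun [set: T] (fun t => (w j)%:E * (`|M t i j|)%:E)%E.
  by apply: emeasurable_funM => //; apply/measurable_EFinP; exact: mabs.
rewrite (eq_integral (fun t => \sum_i \sum_j (w j)%:E * (`|M t i j|)%:E))%E; last first.
  move=> t _; rewrite -sumEFin; apply: eq_bigr => i _.
  by rewrite -sumEFin; apply: eq_bigr => j _; rewrite -EFinM mulrC.
have wabs_ge0 i j t : (0 <= (w j)%:E * (`|M t i j|)%:E)%E by rewrite mule_ge0 ?lee_fin.
rewrite ge0_integral_sum //; last 2 first.
- by move=> i; apply: emeasurable_sum => j; exact: mwabs.
- by move=> i t _; rewrite sume_ge0.
transitivity (\sum_(i < m) \sum_(j < n) (w j)%:E * e%:E)%E.
  apply: eq_bigr => i _; rewrite (ge0_integral_sum mu measurableT (mwabs i)) //.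
  apply: eq_bigr => j _; rewrite ge0_integralZl_EFin ?EM //.
  exact/measurable_EFinP/mabs.
rewrite (eq_bigr (fun=> (\sum_j w j * e)%:E)) => [|i _]; last first.
  by rewrite -sumEFin; apply: eq_bigr => j _; rewrite EFinM.
rewrite sumEFin sumr_const card_ord -mulr_natl -mulr_suml.
by congr (_%:E); ring.
Qed.

End weighted_abs_entries.

Lemma ln_five_quarters_div_gt0 {R : realType} (delta : R) :
  0 < delta -> delta < 1 -> 0 < ln (5 / 4 / delta).
Proof.
move=> delta_gt0 delta_lt1; rewrite ln_gt0 // ltr_pdivlMr // mul1r.
by rewrite (lt_trans delta_lt1) // ltr_pdivlMr // mul1r ltr_nat.
Qed.

Lemma sqrt_noise_variance {R : realType} (B eps L : R) :
  0 < B -> 0 < eps -> 0 <= L ->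
  Num.sqrt (8 * B ^+ 2 * L / eps ^+ 2) = 2 * B * Num.sqrt (2 * L) / eps.
Proof.
move=> B_gt0 eps_gt0 L_ge0.
rewrite (_ : 8 * B ^+ 2 * L / eps ^+ 2 = (2 * B / eps) ^+ 2 * (2 * L)); last first.
  by field; rewrite gt_eqF.
rewrite sqrtrM ?sqr_ge0 // sqrtr_sqr ger0_norm; last by rewrite divr_ge0 ?mulr_ge0 ?ltW.
by rewrite mulrAC.
Qed.

Theorem lemma2 (R : realType) :
  exists c : R, 0 < c /\
  forall (d r m : nat) (b B eps delta : R),
    (0 < d)%N -> (2 <= r)%N -> (0 < m)%N ->
    1 < b -> m%:R = r%:R * (ln r%:R / ln b) ->
    0 < B -> 0 < eps -> 0 < delta -> delta < 1 ->
    forall (dT : measure_display) (T : measurableType dT) (P : probability T R)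
      (eta : T -> 'M[R]_(m, d + 1)),
      (forall i j, measurable_fun setT (fun t => eta t i j)) ->
      mutually_independent P (fun ij : 'I_m * 'I_(d + 1) => fun t => eta t ij.1 ij.2) ->
      (forall i j, has_normal_law P (fun t => eta t i j) 0
         (Num.sqrt (8 * B ^+ 2 * ln (5 / 4 / delta) / eps ^+ 2))) ->
      forall beta : 'cV[R]_d,
        (c%:E <= P [set t | (l1norm (eta t *m beta_ext beta) <=
            2 * B * (r%:R * (ln r%:R / ln b)) * Num.sqrt (2 * ln (5 / 4 / delta)) / eps
              * l1norm (beta_ext beta))%R])%E.
Proof.
pose kappa : R := Num.sqrt (2 / pi).
exists (1 - kappa); split; first by rewrite subr_gt0 sqrt2_divpi_lt1.
move=> d r m b B eps delta _ _ m_gt0 _ <- B_gt0 eps_gt0 delta_gt0 delta_lt1.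
move=> dT T P eta meta _ law beta.
have L_gt0 := ln_five_quarters_div_gt0 delta_gt0 delta_lt1.
set s := Num.sqrt _ in law.
have s_def : s = 2 * B * Num.sqrt (2 * ln (5 / 4 / delta)) / eps.
  exact: sqrt_noise_variance B_gt0 eps_gt0 (ltW L_gt0).
have s_gt0 : 0 < s by rewrite s_def divr_gt0 // !mulr_gt0 // sqrtr_gt0 mulr_gt0.
set N := l1norm (beta_ext beta).
have N_gt0 : 0 < N by apply: lt_le_trans (l1norm_beta_ext_ge1 beta).
rewrite (_ : _ * N = m%:R * s * N); last by rewrite s_def; ring.
set w := fun j => `|beta_ext beta j 0|.
have w_ge0 j : 0 <= w j by exact: normr_ge0.
pose Y t := \sum_i \sum_j `|eta t i j| * w j.
have mY : measurable_fun [set: T] Y by exact: measurable_weighted_abs_entries.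
have EY : (\int[P]_t (Y t)%:E = (kappa * (m%:R * s * N))%:E)%E.
  rewrite (integral_weighted_abs_entries (e := kappa * s) meta) //.
    by rewrite -l1norm_col -/N; congr (_%:E); ring.
  by move=> i j; exact: integral_abs_normal_law.
apply: le_trans (markov_prob_lt_ge1B (a := m%:R * s * N) _ mY
  (weighted_abs_entries_ge0 _ w_ge0) _) _.
- by rewrite !mulr_gt0 ?ltr0n.
- by rewrite -EY; apply: lexx.
apply: le_measure; last by move=> t /= /ltW; apply: le_trans (l1norm_mulmx_le _ _).
- by apply/mem_set; rewrite -[X in measurable X]setTI; exact: measurable_fun_lt.
- apply/mem_set; rewrite -[X in measurable X]setTI.
  by apply: measurable_fun_le => //; exact: measurable_l1norm_mulmx.
Qed.
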